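(* Let $({\mathcal B};{\mathcal V},{\mathcal H};{\mathcal P})$ be a slim (discrete) double groupoid satisfying the filling condition. On ${\mathcal V}\times_{b,l}{\mathcal H}=\{(v,h)\in{\mathcal V}\times{\mathcal H}: b(v)=l(h)\}$ define $(v_1,h_1)\sim_{\mathcal B}(v_2,h_2)$ iff $r(h_1)=r(h_2)$, $t(v_1)=t(v_2)$ and $v_1h_1h_2^{-1}v_2^{-1}\in J_\circledast({\mathcal B})$. Then $\sim_{\mathcal B}$ is an equivalence relation, and the map $$\phi:({\mathcal V}\times_{b,l}{\mathcal H})/\!\sim_{\mathcal B}\ \to{\mathcal D}({\mathcal B}),\qquad [v,h]\mapsto j(v)i(h)$$ is well defined and is a bijection (of quivers over ${\mathcal P}$, i.e. compatible with the maps to ${\mathcal P}$ given by $[v,h]\mapsto t(v)$, $[v,h]\mapsto r(h)$ and the source/target of ${\mathcal D}({\mathcal B})$).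
   Context: A (discrete) double groupoid $({\mathcal B};{\mathcal V},{\mathcal H};{\mathcal P})$: ${\mathcal V}$ and ${\mathcal H}$ are groupoids over ${\mathcal P}$; for ${\mathcal V}$ source/end are $t,b$, for ${\mathcal H}$ source/end are $l,r$. ${\mathcal B}$ is a set of ''boxes'' $A$ with sides $t(A),b(A)\in{\mathcal H}$, $l(A),r(A)\in{\mathcal V}$ (with $l(t(A))=t(l(A))$, $r(t(A))=t(r(A))$, $l(b(A))=b(l(A))$, $r(b(A))=b(r(A))$), carrying a horizontal groupoid structure over ${\mathcal V}$ (source $l$, target $r$; product $AB$ when $r(A)=l(B)$, with $t(AB)=t(A)t(B)$, $b(AB)=b(A)b(B)$) and a vertical groupoid structure over ${\mathcal H}$ (source $t$, target $b$; product when $b(A)=t(B)$, with left and right sides multiplied), the structure maps of each being morphisms for the other. It is slim if each box is determined by its four sides. It satisfies the filling condition if for every $x\in{\mathcal H}$, $f\in{\mathcal V}$ with $l(x)=t(f)$ there is a box $A$ with $t(A)=x$, $l(A)=f$; by symmetry of the axioms (using inverses) any ''corner'' of two compatible sides can be completed to a box. ${\mathcal V}\circledast{\mathcal H}$ is the free product groupoid over ${\mathcal P}$ of ${\mathcal V}$ and ${\mathcal H}$ (generated by ${\mathcal V}$ and ${\mathcal H}$ glued along identities, with words of composable arrows). For a box $A$ with top $x$, right $g$, bottom $y$, left $h$, set $[A]=xgy^{-1}h^{-1}\in{\mathcal V}\circledast{\mathcal H}$; $J_\circledast({\mathcal B})$ is the subgroupoid generated by all $[A]$, a normal group bundle. The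 diagonal groupoid is ${\mathcal D}({\mathcal B})=({\mathcal V}\circledast{\mathcal H})/J_\circledast({\mathcal B})$, and $i:{\mathcal H}\to{\mathcal D}({\mathcal B})$, $j:{\mathcal V}\to{\mathcal D}({\mathcal B})$ are the compositions of the natural inclusions with the projection. *)

From Stdlib Require Import List Relations RelationClasses.
Import ListNotations.
Set Implicit Arguments.

(** Composition is written in diagrammatic order: [comp x y] is "x then y",
    defined (meaningful) when [tgt x = src y]; it is a total function whose
    values outside composable pairs are irrelevant. *)
Record is_groupoid (O A : Type) (src tgt : A -> O) (id : O -> A)
    (comp : A -> A -> A) (inv : A -> A) : Prop := {
  gid_src : forall p, src (id p) = p;
  gid_tgt : forall p, tgt (id p) = p;
  gcomp_src : forall x y, tgt x = src y -> src (comp x y) = src x;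
  gcomp_tgt : forall x y, tgt x = src y -> tgt (comp x y) = tgt y;
  gcomp_assoc : forall x y z, tgt x = src y -> tgt y = src z ->
      comp (comp x y) z = comp x (comp y z);
  gid_left : forall x, comp (id (src x)) x = x;
  gid_right : forall x, comp x (id (tgt x)) = x;
  ginv_src : forall x, src (inv x) = tgt x;
  ginv_tgt : forall x, tgt (inv x) = src x;
  ginv_right : forall x, comp x (inv x) = id (src x);
  ginv_left : forall x, comp (inv x) x = id (tgt x)
}.

Record groupoid (P : Type) := Groupoid {
  garr :> Type;
  gsrc : garr -> P;
  gtgt : garr -> P;
  gid : P -> garr;
  gcomp : garr -> garr -> garr;
  ginv : garr -> garr;
  g_ax : is_groupoid gsrc gtgt gid gcomp ginv
}.
Arguments gsrc {P} g _.
Arguments gtgt {P} g _.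
Arguments gid {P} g _.
Arguments gcomp {P} g _ _.
Arguments ginv {P} g _.

(** * Double groupoids (B; V, H; P).
    For V: source = t ([gsrc V]), target = b ([gtgt V]).
    For H: source = l ([gsrc H]), target = r ([gtgt H]). *)
Record double_groupoid (P : Type) (V H : groupoid P) := DoubleGroupoid {
  box : Type;
  btop : box -> H;
  bbot : box -> H;
  bleft : box -> V;
  bright : box -> V;
  hid : V -> box;
  hcomp : box -> box -> box;
  hinv : box -> box;
  vid : H -> box;
  vcomp : box -> box -> box;
  vinv : box -> box;
  corner_tl : forall A, gsrc H (btop A) = gsrc V (bleft A);
  corner_tr : forall A, gtgt H (btop A) = gsrc V (bright A);
  corner_bl : forall A, gsrc H (bbot A) = gtgt V (bleft A);
  corner_br : forall A, gtgt H (bbot A) = gtgt V (bright A);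
  hgroupoid : is_groupoid bleft bright hid hcomp hinv;
  vgroupoid : is_groupoid btop bbot vid vcomp vinv;
  hcomp_top : forall A B, bright A = bleft B ->
      btop (hcomp A B) = gcomp H (btop A) (btop B);
  hcomp_bot : forall A B, bright A = bleft B ->
      bbot (hcomp A B) = gcomp H (bbot A) (bbot B);
  hid_top : forall v, btop (hid v) = gid H (gsrc V v);
  hid_bot : forall v, bbot (hid v) = gid H (gtgt V v);
  vcomp_left : forall A B, bbot A = btop B ->
      bleft (vcomp A B) = gcomp V (bleft A) (bleft B);
  vcomp_right : forall A B, bbot A = btop B ->
      bright (vcomp A B) = gcomp V (bright A) (bright B);
  vid_left : forall h, bleft (vid h) = gid V (gsrc H h);
  vid_right : forall h, bright (vid h) = gid V (gtgt H h);
  hid_vcomp : forall v w, gtgt V v = gsrc V w ->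
      hid (gcomp V v w) = vcomp (hid v) (hid w);
  vid_hcomp : forall h k, gtgt H h = gsrc H k ->
      vid (gcomp H h k) = hcomp (vid h) (vid k);
  hid_vid : forall p, hid (gid V p) = vid (gid H p);
  interchange : forall A B C D,
      bright A = bleft B -> bright C = bleft D ->
      bbot A = btop C -> bbot B = btop D ->
      vcomp (hcomp A B) (hcomp C D) = hcomp (vcomp A C) (vcomp B D)
}.
Arguments box {P V H} d.
Arguments btop {P V H} d _.
Arguments bbot {P V H} d _.
Arguments bleft {P V H} d _.
Arguments bright {P V H} d _.

Section FreeProduct.
Variables (P : Type) (V H : groupoid P) (D : double_groupoid V H).

Definition slim : Prop :=
  forall A B : box D, btop D A = btop D B -> bbot D A = bbot D B ->
    bleft D A = bleft D B -> bright D A = bright D B -> A = B.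

Definition filling : Prop :=
  forall (x : H) (f : V), gsrc H x = gsrc V f ->
    exists A : box D, btop D A = x /\ bleft D A = f.

(** * The free product groupoid V ⊛ H, modelled by words of letters. *)
Inductive letter : Type := LV (v : V) | LH (h : H).

Inductive wpath : P -> list letter -> P -> Prop :=
  | wpath_nil : forall p, wpath p [] p
  | wpath_V : forall (v : V) w q, wpath (gtgt V v) w q ->
      wpath (gsrc V v) (LV v :: w) q
  | wpath_H : forall (h : H) w q, wpath (gtgt H h) w q ->
      wpath (gsrc H h) (LH h :: w) q.

Inductive fstep : list letter -> list letter -> Prop :=
  | fstep_VV : forall l r (x y : V), gtgt V x = gsrc V y ->
      fstep (l ++ [LV x; LV y] ++ r) (l ++ [LV (gcomp V x y)] ++ r)
  | fstep_HH : forall l r (x y : H), gtgt H x = gsrc H y ->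
      fstep (l ++ [LH x; LH y] ++ r) (l ++ [LH (gcomp H x y)] ++ r)
  | fstep_idV : forall l r p, fstep (l ++ [LV (gid V p)] ++ r) (l ++ r)
  | fstep_idH : forall l r p, fstep (l ++ [LH (gid H p)] ++ r) (l ++ r).

(** Equality of arrows p -> q in V ⊛ H. *)
Definition free_eq (p q : P) : relation (list letter) :=
  clos_refl_sym_trans _
    (fun a c => wpath p a q /\ wpath p c q /\ fstep a c).

Definition letter_inv (a : letter) : letter :=
  match a with LV v => LV (ginv V v) | LH h => LH (ginv H h) end.

Definition winv (w : list letter) : list letter := rev (map letter_inv w).

(** [A] = x g y^{-1} h^{-1} (top x, right g, bottom y, left h). *)
Definition boxword (A : box D) : list letter :=
  [LH (btop D A); LV (bright D A); LH (ginv H (bbot D A)); LV (ginv V (bleft D A))].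

(** Membership (at the object p) in J_⊛(B), the subgroupoid of V ⊛ H
    generated by all [A]: the word is equal in V ⊛ H to a (possibly empty)
    composable product of generators [A] and their inverses. *)
Definition inJ (p : P) (w : list letter) : Prop :=
  wpath p w p /\
  exists ws : list (list letter),
    Forall (fun u => exists A : box D, u = boxword A \/ u = winv (boxword A)) ws /\
    free_eq p p w (concat ws).

(** Equality of arrows p -> q in D(B) = (V ⊛ H)/J_⊛(B). *)
Definition D_eq (p q : P) (w1 w2 : list letter) : Prop :=
  wpath p w1 q /\ wpath p w2 q /\ inJ p (w1 ++ winv w2).

Definition VH : Type := { vh : V * H | gtgt V (fst vh) = gsrc H (snd vh) }.

Definition simB (x y : VH) : Prop :=
  let '(v1, h1) := proj1_sig x in
  let '(v2, h2) := proj1_sig y in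
  gtgt H h1 = gtgt H h2 /\ gsrc V v1 = gsrc V v2 /\
  inJ (gsrc V v1) [LV v1; LH h1; LH (ginv H h2); LV (ginv V v2)].

(** phi [v,h] = j(v) i(h), represented by the word v h from t(v) to r(h). *)
Definition phi_word (x : VH) : list letter :=
  [LV (fst (proj1_sig x)); LH (snd (proj1_sig x))].
Definition phi_src (x : VH) : P := gsrc V (fst (proj1_sig x)).
Definition phi_tgt (x : VH) : P := gtgt H (snd (proj1_sig x)).

End FreeProduct.

(** An arrow of the diagonal groupoid D(B) = (V ⊛ H)/J is a word in
    vertical and horizontal arrows, two words being identified when their
    "quotient" lies in J, the subgroupoid generated by the boundaries of
    boxes.  With this reading, well-definedness and injectivity of
    phi [v,h] = j(v) i(h) are immediate from the definitions, and the content
    of the proposition is: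
    - ~_B is an equivalence, because J is closed under products and inverses;
    - phi is surjective: every word is equal modulo J to a word [v; h].
    The key to surjectivity is that, thanks to the filling condition, J is
    normal: conjugating a box boundary by a letter yields (up to
    free-product moves) the boundary of a box composite with a filler box.
    Normality then lets us push every horizontal letter of a word past a
    vertical one through the boundary of a filler box, by induction on the
    word. *)

From Stdlib Require Import List Relations RelationClasses.
Import ListNotations.
Set Implicit Arguments.
Arguments LV {P V H} v.
Arguments LH {P V H} h.

Section GroupoidAlgebra.
Context (O A : Type) (src tgt : A -> O) (id : O -> A) (comp : A -> A -> A)
  (inv : A -> A) (G : is_groupoid src tgt id comp inv).

Lemma inv_unique x y : tgt x = src y -> comp x y = id (src x) -> y = inv x.
Proof.
  intros exy e.
  rewrite <- (gid_left G y), <- exy, <- (ginv_left G x).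
  rewrite (gcomp_assoc G); [| apply (ginv_tgt G) | exact exy].
  rewrite e, <- (ginv_tgt G x). apply (gid_right G).
Qed.

Lemma inv_inv x : inv (inv x) = x.
Proof.
  symmetry. apply inv_unique; [apply (ginv_tgt G) |].
  rewrite (ginv_left G), (ginv_src G). reflexivity.
Qed.

Lemma inv_id p : inv (id p) = id p.
Proof.
  symmetry. apply inv_unique; rewrite ?(gid_src G), ?(gid_tgt G); [reflexivity |].
  pose proof (gid_left G (id p)) as e. rewrite (gid_src G) in e. exact e.
Qed.

Lemma comp_inv_l x y : tgt x = src y -> comp (inv x) (comp x y) = y.
Proof.
  intros e. rewrite <- (gcomp_assoc G); [| apply (ginv_tgt G) | exact e].
  rewrite (ginv_left G), e. apply (gid_left G).
Qed.

Lemma inv_comp x y : tgt x = src y -> inv (comp x y) = comp (inv y) (inv x).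
Proof.
  intros e.
  assert (e1 : tgt (inv y) = src (inv x)) by (rewrite (ginv_tgt G), (ginv_src G); auto).
  symmetry. apply inv_unique.
  - rewrite (gcomp_tgt G _ _ e), (gcomp_src G _ _ e1), (ginv_src G). reflexivity.
  - rewrite (gcomp_src G _ _ e), <- (gcomp_assoc G); [| rewrite (gcomp_tgt G _ _ e), (ginv_src G); auto | exact e1].
    rewrite (gcomp_assoc G _ _ _ e); [| rewrite (ginv_src G); reflexivity].
    rewrite (ginv_right G), <- e, (gid_right G), (ginv_right G). reflexivity.
Qed.

Lemma comp_inv_comp x y : tgt x = src y -> comp (inv (comp x y)) x = inv y.
Proof.
  intros e. rewrite inv_comp by exact e.
  rewrite (gcomp_assoc G); [| rewrite (ginv_tgt G), (ginv_src G); auto | apply (ginv_tgt G)].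
  rewrite (ginv_left G), e, <- (ginv_tgt G y). apply (gid_right G).
Qed.

End GroupoidAlgebra.

Section Words.
Context (P : Type) (V H : groupoid P).
Notation L := (letter V H).
Notation GV := (g_ax V).
Notation GH := (g_ax H).

(** Constructors and inversion lemmas for composable words, stated with
    the endpoint as an equation so that they apply up to rewriting. *)
Lemma wpath_V (v : V) (w : list L) p q :
  gsrc V v = p -> wpath (gtgt V v) w q -> wpath p (LV v :: w) q.
Proof. intros <- hw. constructor; exact hw. Qed.

Lemma wpath_H (h : H) (w : list L) p q :
  gsrc H h = p -> wpath (gtgt H h) w q -> wpath p (LH h :: w) q.
Proof. intros <- hw. constructor; exact hw. Qed.

Lemma wpath_V_inv (v : V) (w : list L) p q :
  wpath p (LV v :: w) q -> p = gsrc V v /\ wpath (gtgt V v) w q.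
Proof. intros hw. inversion hw; subst; auto. Qed.

Lemma wpath_H_inv (h : H) (w : list L) p q :
  wpath p (LH h :: w) q -> p = gsrc H h /\ wpath (gtgt H h) w q.
Proof. intros hw. inversion hw; subst; auto. Qed.

Lemma wpath_nil_inv p q : wpath (V:=V) (H:=H) p [] q -> p = q.
Proof. intros hw. inversion hw; reflexivity. Qed.

Lemma wpath_VH (v : V) (h : H) :
  gtgt V v = gsrc H h -> wpath (gsrc V v) [LV v; LH h] (gtgt H h).
Proof. intros e. apply wpath_V; auto. rewrite e. apply wpath_H; auto. constructor. Qed.

Lemma wpath_app (a b : list L) p m q :
  wpath p a m -> wpath m b q -> wpath p (a ++ b) q.
Proof. intros ha hb. induction ha; simpl; auto; constructor; auto. Qed.

Lemma wpath_app_inv (a b : list L) p q :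
  wpath p (a ++ b) q -> exists m, wpath p a m /\ wpath m b q.
Proof.
  revert p. induction a as [|[v|h] a IH]; intros p hw; simpl in *.
  - exists p. split; [constructor | exact hw].
  - apply wpath_V_inv in hw as [-> hw]. destruct (IH _ hw) as [m [h1 h2]].
    exists m. split; [constructor |]; auto.
  - apply wpath_H_inv in hw as [-> hw]. destruct (IH _ hw) as [m [h1 h2]].
    exists m. split; [constructor |]; auto.
Qed.

Lemma wpath_tgt_uniq (a : list L) p q q' : wpath p a q -> wpath p a q' -> q = q'.
Proof.
  intros h1. revert q'. induction h1; intros q' h2.
  - apply wpath_nil_inv in h2; auto.
  - apply wpath_V_inv in h2 as [_ h2]. auto.
  - apply wpath_H_inv in h2 as [_ h2]. auto.
Qed.

Lemma wpath_src_uniq (a : list L) p q p' q' :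
  a <> [] -> wpath p a q -> wpath p' a q' -> p = p'.
Proof.
  intros ne h1 h2. destruct a as [|[v|h] a]; [congruence | |].
  - apply wpath_V_inv in h1 as [-> _]. apply wpath_V_inv in h2 as [-> _]. reflexivity.
  - apply wpath_H_inv in h1 as [-> _]. apply wpath_H_inv in h2 as [-> _]. reflexivity.
Qed.

Lemma letter_inv_inv (a : L) : letter_inv (letter_inv a) = a.
Proof. destruct a; simpl; f_equal; apply (inv_inv (g_ax _)). Qed.

Lemma winv_single (a : L) : winv [a] = [letter_inv a].
Proof. reflexivity. Qed.

Lemma winv_app (a b : list L) : winv (a ++ b) = winv b ++ winv a.
Proof. unfold winv. rewrite map_app, rev_app_distr. reflexivity. Qed.

Lemma winv_winv (a : list L) : winv (winv a) = a.
Proof.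
  unfold winv. rewrite map_rev, rev_involutive, map_map.
  induction a as [|x a IH]; simpl; [reflexivity |]. rewrite letter_inv_inv, IH. reflexivity.
Qed.

Lemma winv_concat (ws : list (list L)) : winv (concat ws) = concat (rev (map (fun w => winv w) ws)).
Proof.
  induction ws as [|w ws IH]; simpl; [reflexivity |].
  rewrite winv_app, IH, concat_app. simpl. rewrite app_nil_r. reflexivity.
Qed.

Lemma wpath_winv (a : list L) p q : wpath p a q -> wpath q (winv a) p.
Proof.
  intros h. induction h as [p | v w q _ IH | h w q _ IH]; [constructor | |];
    change (winv (?x :: w)) with (winv ([x] ++ w)); rewrite winv_app; simpl.
  - apply wpath_app with (gtgt V v); auto.
    apply wpath_V; [apply (ginv_src GV) |]. rewrite (ginv_tgt GV). constructor.
  - apply wpath_app with (gtgt H h); auto.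
    apply wpath_H; [apply (ginv_src GH) |]. rewrite (ginv_tgt GH). constructor.
Qed.

Lemma wpath_letter_inv (a : L) p m : wpath p [a] m -> wpath m [letter_inv a] p.
Proof. rewrite <- winv_single. apply wpath_winv. Qed.

Lemma fstep_winv (a c : list L) : fstep a c -> fstep (winv a) (winv c).
Proof.
  intros h. destruct h; rewrite !winv_app; simpl; unfold winv; simpl;
    rewrite <- ?app_assoc; simpl.
  - rewrite (inv_comp GV) by assumption. apply (fstep_VV (H:=H)).
    rewrite (ginv_tgt GV), (ginv_src GV). auto.
  - rewrite (inv_comp GH) by assumption. apply (fstep_HH (V:=V)).
    rewrite (ginv_tgt GH), (ginv_src GH). auto.
  - rewrite (inv_id GV). apply fstep_idV.
  - rewrite (inv_id GH). apply fstep_idH.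
Qed.

Lemma free_eq_winv p q (a c : list L) :
  free_eq p q a c -> free_eq q p (winv a) (winv c).
Proof.
  intros h. induction h as [x y [h1 [h2 h3]] | | |].
  - apply rst_step. auto using wpath_winv, fstep_winv.
  - apply rst_refl.
  - apply rst_sym; assumption.
  - eapply rst_trans; eassumption.
Qed.

Lemma free_eq_paths p q (a c : list L) :
  free_eq p q a c -> a = c \/ (wpath p a q /\ wpath p c q).
Proof.
  intros h. induction h as [x y [h1 [h2 _]] | | | x y z _ IH1 _ IH2].
  - right; auto.
  - left; reflexivity.
  - destruct IHh as [-> | []]; auto.
  - destruct IH1 as [-> | []], IH2 as [-> | []]; auto.
Qed.

Lemma fstep_app (l a c r : list L) : fstep a c -> fstep (l ++ a ++ r) (l ++ c ++ r).
Proof.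
  intros h. destruct h as [l0 r0 x y e | l0 r0 x y e | l0 r0 m | l0 r0 m];
    rewrite !app_assoc, <- !(app_assoc (l ++ l0)).
  - apply fstep_VV; exact e.
  - apply fstep_HH; exact e.
  - apply fstep_idV.
  - apply fstep_idH.
Qed.

Lemma free_eq_app p m n q (l a c r : list L) :
  free_eq m n a c -> wpath p l m -> wpath n r q ->
  free_eq p q (l ++ a ++ r) (l ++ c ++ r).
Proof.
  intros h hl hr. induction h as [x y [h1 [h2 h3]] | | |].
  - apply rst_step. split; [| split]; eauto using wpath_app, fstep_app.
  - apply rst_refl.
  - apply rst_sym; assumption.
  - eapply rst_trans; eassumption.
Qed.

(** Each elementary move below is stated as a
    backward rule, so that a chain of moves reads from left to right. *)
Definition reduces p q (a c : list L) : Prop :=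
  wpath p a q -> free_eq p q a c /\ wpath p c q.

Lemma reduces_refl p q a : reduces p q a a.
Proof. intros h; split; [apply rst_refl | exact h]. Qed.

Lemma reduces_eq p q (a b c : list L) : a = b -> reduces p q b c -> reduces p q a c.
Proof. intros ->; auto. Qed.

Lemma reduces_step p q l r (a b c : list L) :
  (forall m n, wpath m a n -> wpath m b n /\ fstep a b) ->
  reduces p q (l ++ b ++ r) c -> reduces p q (l ++ a ++ r) c.
Proof.
  intros hab hr hw.
  destruct (wpath_app_inv _ _ hw) as [m [hl hw']].
  destruct (wpath_app_inv _ _ hw') as [n [ha hr']].
  destruct (hab _ _ ha) as [hb hs].
  assert (hw2 : wpath p (l ++ b ++ r) q) by eauto using wpath_app.
  destruct (hr hw2) as [f hc]. split; [| exact hc].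
  apply rst_trans with (l ++ b ++ r); [| exact f].
  apply rst_step. split; [| split]; auto using fstep_app.
Qed.

Lemma reduces_VV p q l r (x y : V) c :
  reduces p q (l ++ LV (gcomp V x y) :: r) c -> reduces p q (l ++ LV x :: LV y :: r) c.
Proof.
  intros hr. apply reduces_step with (a := [LV x; LV y]) (b := [LV (gcomp V x y)]); [| exact hr].
  intros m n hw. apply wpath_V_inv in hw as [-> hw]. apply wpath_V_inv in hw as [e hw].
  split; [| apply (fstep_VV [] []); exact e].
  apply wpath_V; [apply (gcomp_src GV); exact e |].
  rewrite (gcomp_tgt GV) by exact e. exact hw.
Qed.

Lemma reduces_HH p q l r (x y : H) c :
  reduces p q (l ++ LH (gcomp H x y) :: r) c -> reduces p q (l ++ LH x :: LH y :: r) c.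
Proof.
  intros hr. apply reduces_step with (a := [LH x; LH y]) (b := [LH (gcomp H x y)]); [| exact hr].
  intros m n hw. apply wpath_H_inv in hw as [-> hw]. apply wpath_H_inv in hw as [e hw].
  split; [| apply (fstep_HH [] []); exact e].
  apply wpath_H; [apply (gcomp_src GH); exact e |].
  rewrite (gcomp_tgt GH) by exact e. exact hw.
Qed.

Lemma reduces_idV p q l r m0 c :
  reduces p q (l ++ r) c -> reduces p q (l ++ LV (gid V m0) :: r) c.
Proof.
  intros hr. apply reduces_step with (a := [LV (gid V m0)]) (b := []); [| exact hr].
  intros m n hw. apply wpath_V_inv in hw as [-> hw].
  rewrite (gid_src GV), <- (wpath_nil_inv hw), (gid_tgt GV).
  split; [constructor | apply (fstep_idV [] [])].
Qed.

Lemma reduces_idH p q l r m0 c :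
  reduces p q (l ++ r) c -> reduces p q (l ++ LH (gid H m0) :: r) c.
Proof.
  intros hr. apply reduces_step with (a := [LH (gid H m0)]) (b := []); [| exact hr].
  intros m n hw. apply wpath_H_inv in hw as [-> hw].
  rewrite (gid_src GH), <- (wpath_nil_inv hw), (gid_tgt GH).
  split; [constructor | apply (fstep_idH [] [])].
Qed.

Lemma reduces_cancelV p q l r (x : V) c :
  reduces p q (l ++ r) c -> reduces p q (l ++ LV x :: LV (ginv V x) :: r) c.
Proof. intros hr. apply reduces_VV. rewrite (ginv_right GV). apply reduces_idV, hr. Qed.

Lemma reduces_cancelV' p q l r (x : V) c :
  reduces p q (l ++ r) c -> reduces p q (l ++ LV (ginv V x) :: LV x :: r) c.
Proof. intros hr. apply reduces_VV. rewrite (ginv_left GV). apply reduces_idV, hr. Qed.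

Lemma reduces_cancelH p q l r (x : H) c :
  reduces p q (l ++ r) c -> reduces p q (l ++ LH x :: LH (ginv H x) :: r) c.
Proof. intros hr. apply reduces_HH. rewrite (ginv_right GH). apply reduces_idH, hr. Qed.

Lemma reduces_cancelH' p q l r (x : H) c :
  reduces p q (l ++ r) c -> reduces p q (l ++ LH (ginv H x) :: LH x :: r) c.
Proof. intros hr. apply reduces_HH. rewrite (ginv_left GH). apply reduces_idH, hr. Qed.

End Words.
Arguments wpath_VH {P V H v h} e.

Section BoundarySubgroupoid.
Context (P : Type) (V H : groupoid P) (D : double_groupoid V H).
Notation L := (letter V H).
Notation GV := (g_ax V).
Notation GH := (g_ax H).

Definition generator (g : list L) : Prop :=
  exists A : box D, g = boxword D A \/ g = winv (boxword D A).

Lemma wpath_boxword A :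
  wpath (gsrc V (bleft D A)) (boxword D A) (gsrc V (bleft D A)).
Proof.
  unfold boxword. apply wpath_H; [apply corner_tl |]. rewrite corner_tr.
  apply wpath_V; [reflexivity |]. apply wpath_H; [rewrite (ginv_src GH), corner_br; reflexivity |].
  rewrite (ginv_tgt GH), corner_bl. apply wpath_V; [apply (ginv_src GV) |].
  rewrite (ginv_tgt GV). constructor.
Qed.

Lemma winv_boxword A : winv (boxword D A) =
  [LV (bleft D A); LH (bbot D A); LV (ginv V (bright D A)); LH (ginv H (btop D A))].
Proof. unfold boxword, winv. simpl. rewrite (inv_inv GV), (inv_inv GH). reflexivity. Qed.

Lemma generator_loop g : generator g -> exists b, wpath b g b /\ g <> [].
Proof.
  intros [A [-> | ->]]; exists (gsrc V (bleft D A)); split.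
  - apply wpath_boxword.
  - discriminate.
  - apply wpath_winv, wpath_boxword.
  - unfold boxword, winv; simpl; discriminate.
Qed.

Lemma inJ_nil p : inJ D p [].
Proof. split; [constructor |]. exists []. split; [constructor | apply rst_refl]. Qed.

Lemma inJ_box A : inJ D (gsrc V (bleft D A)) (boxword D A).
Proof.
  split; [apply wpath_boxword |]. exists [boxword D A]. split.
  - constructor; [exists A; left; reflexivity | constructor].
  - simpl. rewrite ?app_nil_r. apply rst_refl.
Qed.

Lemma inJ_reduce p (a c : list L) : inJ D p a -> reduces p p a c -> inJ D p c.
Proof.
  intros [hw [ws [hf he]]] hr. destruct (hr hw) as [f hc]. split; [exact hc |].
  exists ws; split; [exact hf |]. eapply rst_trans; [apply rst_sym; exact f | exact he].
Qed.

Lemma inJ_expand p (a c : list L) :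
  inJ D p c -> reduces p p a c -> wpath p a p -> inJ D p a.
Proof.
  intros [hw [ws [hf he]]] hr ha. destruct (hr ha) as [f hc]. split; [exact ha |].
  exists ws; split; [exact hf |]. eapply rst_trans; [exact f | exact he].
Qed.

Lemma inJ_app p (a b : list L) : inJ D p a -> inJ D p b -> inJ D p (a ++ b).
Proof.
  intros [ha [ws1 [hf1 he1]]] [hb [ws2 [hf2 he2]]]. split; [eapply wpath_app; eassumption |].
  exists (ws1 ++ ws2). split; [apply Forall_app; auto |].
  assert (hc : wpath p (concat ws1) p).
  { destruct (free_eq_paths he1) as [<- | []]; assumption. }
  rewrite concat_app. eapply rst_trans.
  - exact (free_eq_app (l := []) he1 (wpath_nil V H p) hb).
  - pose proof (free_eq_app (r := []) he2 hc (wpath_nil V H p)) as e.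
    rewrite !app_nil_r in e. exact e.
Qed.

Lemma inJ_winv p (a : list L) : inJ D p a -> inJ D p (winv a).
Proof.
  intros [ha [ws [hf he]]]. split; [apply wpath_winv; exact ha |].
  exists (rev (map (fun w => winv w) ws)). split.
  - apply Forall_rev, Forall_map. eapply Forall_impl; [| exact hf].
    intros w [A [-> | ->]]; exists A; [right | left]; auto using winv_winv.
  - rewrite <- winv_concat. apply free_eq_winv; exact he.
Qed.

(** *** Fillers at every corner
    The filling condition completes a top-left corner; inverting boxes
    horizontally or vertically completes the top-right and bottom-left
    corners as well. *)

Lemma hinv_top A : btop D (hinv D A) = ginv H (btop D A).
Proof.
  apply (inv_unique GH).
  - rewrite corner_tr, corner_tl, (ginv_src (hgroupoid D)). reflexivity.
  - rewrite <- hcomp_top by (symmetry; apply (ginv_src (hgroupoid D))).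
    rewrite (ginv_right (hgroupoid D)), hid_top, corner_tl. reflexivity.
Qed.

Lemma vinv_left A : bleft D (vinv D A) = ginv V (bleft D A).
Proof.
  apply (inv_unique GV).
  - rewrite <- corner_bl, <- corner_tl, (ginv_src (vgroupoid D)). reflexivity.
  - rewrite <- vcomp_left by (symmetry; apply (ginv_src (vgroupoid D))).
    rewrite (ginv_right (vgroupoid D)), vid_left, corner_tl. reflexivity.
Qed.

Hypothesis Fill : filling D.

Lemma fill_top_right (x : H) (f : V) :
  gtgt H x = gsrc V f -> exists A, btop D A = x /\ bright D A = f.
Proof.
  intros e. destruct (Fill (ginv H x) f) as [C [ht hl]].
  { rewrite (ginv_src GH). exact e. }
  exists (hinv D C). rewrite hinv_top, ht, (inv_inv GH), (ginv_tgt (hgroupoid D)). auto.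
Qed.

Lemma fill_bottom_left (y : H) (f : V) :
  gsrc H y = gtgt V f -> exists A, bbot D A = y /\ bleft D A = f.
Proof.
  intros e. destruct (Fill y (ginv V f)) as [C [ht hl]].
  { rewrite (ginv_src GV). exact e. }
  exists (vinv D C). rewrite vinv_left, hl, (inv_inv GV), (ginv_tgt (vgroupoid D)). auto.
Qed.

End BoundarySubgroupoid.

(** ** Normality of J under the filling condition *)
Section Normality.
Context (P : Type) (V H : groupoid P) (D : double_groupoid V H).
Notation L := (letter V H).
Notation GV := (g_ax V).
Notation GH := (g_ax H).
Hypothesis Fill : filling D.

(** Conjugating [A] by a vertical arrow u ending at its top-left corner:
    with B a filler of bottom t(A) and left u, the word u [A] u^-1 equals
    [B]^-1 [B A] in V ⊛ H, where B A is the vertical composite. *)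
Lemma inJ_conj_V_box (u : V) A : gtgt V u = gsrc V (bleft D A) ->
  inJ D (gsrc V u) ([LV u] ++ boxword D A ++ [LV (ginv V u)]).
Proof.
  intros e.
  assert (etl : gsrc H (btop D A) = gtgt V u) by (rewrite corner_tl; symmetry; exact e).
  destruct (fill_bottom_left Fill _ _ etl) as [B [hb hl]].
  assert (elA : gtgt V (bleft D B) = gsrc V (bleft D A)) by (rewrite hl; exact e).
  assert (er : gtgt V (bright D B) = gsrc V (bright D A))
    by (rewrite <- corner_br, hb, corner_tr; reflexivity).
  assert (JBA := inJ_box D (vcomp D B A)).
  assert (JB := inJ_winv (inJ_box D B)).
  rewrite (vcomp_left _ _ _ hb), (gcomp_src GV _ _ elA) in JBA. rewrite hl in JBA, JB.
  assert (J := inJ_app JB JBA).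
  rewrite winv_boxword in J. unfold boxword in J. simpl in J.
  rewrite (vcomp_left _ _ _ hb), (vcomp_right _ _ _ hb), (gcomp_src (vgroupoid D) _ _ hb),
    (gcomp_tgt (vgroupoid D) _ _ hb), hl, hb in J.
  apply (inJ_expand (c := [LV u; LH (btop D A); LV (bright D A); LH (ginv H (bbot D A));
                           LV (ginv V (gcomp V u (bleft D A)))])).
  - eapply inJ_reduce; [exact J |].
    apply (reduces_cancelH' [LV u; LH (btop D A); LV (ginv V (bright D B))]).
    apply (reduces_VV [LV u; LH (btop D A)]). rewrite (comp_inv_l GV _ _ er).
    apply reduces_refl.
  - simpl. apply (reduces_VV [LV u; LH (btop D A); LV (bright D A); LH (ginv H (bbot D A))]).
    rewrite <- (inv_comp GV _ _ e). apply reduces_refl.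
  - apply wpath_V; [reflexivity |]. rewrite e.
    eapply wpath_app; [apply (wpath_boxword D) |].
    apply wpath_V; [rewrite (ginv_src GV); exact e |]. rewrite (ginv_tgt GV). constructor.
Qed.

(** Conjugating [A] by a horizontal arrow k ending at its top-left corner:
    with B a filler of top k and right l(A), the word k [A] k^-1 equals
    [B A] [B]^-1, where B A is the horizontal composite. *)
Lemma inJ_conj_H_box (k : H) A : gtgt H k = gsrc V (bleft D A) ->
  inJ D (gsrc H k) ([LH k] ++ boxword D A ++ [LH (ginv H k)]).
Proof.
  intros e.
  destruct (fill_top_right Fill _ _ e) as [B [ht hr]].
  assert (eb : gsrc V (bleft D B) = gsrc H k) by (rewrite <- corner_tl, ht; reflexivity).
  assert (ey : gtgt H (bbot D B) = gsrc H (bbot D A))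
    by (rewrite corner_br, hr, corner_bl; reflexivity).
  assert (JBA := inJ_box D (hcomp D B A)).
  assert (JB := inJ_winv (inJ_box D B)).
  rewrite (gcomp_src (hgroupoid D) _ _ hr), eb in JBA. rewrite eb in JB.
  assert (J := inJ_app JBA JB).
  rewrite winv_boxword in J. unfold boxword in J. simpl in J.
  rewrite (hcomp_top _ _ _ hr), (hcomp_bot _ _ _ hr), (gcomp_src (hgroupoid D) _ _ hr),
    (gcomp_tgt (hgroupoid D) _ _ hr), hr, ht in J.
  apply (inJ_expand (c := [LH (gcomp H k (btop D A)); LV (bright D A); LH (ginv H (bbot D A));
                           LV (ginv V (bleft D A)); LH (ginv H k)])).
  - eapply inJ_reduce; [exact J |].
    apply (reduces_cancelV' [LH (gcomp H k (btop D A)); LV (bright D A);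
                             LH (ginv H (gcomp H (bbot D B) (bbot D A)))]).
    apply (reduces_HH [LH (gcomp H k (btop D A)); LV (bright D A)]).
    rewrite (comp_inv_comp GH _ _ ey). apply reduces_refl.
  - simpl. apply (reduces_HH []). apply reduces_refl.
  - apply wpath_H; [reflexivity |]. rewrite e.
    eapply wpath_app; [apply (wpath_boxword D) |].
    apply wpath_H; [rewrite (ginv_src GH); exact e |]. rewrite (ginv_tgt GH). constructor.
Qed.

Lemma inJ_conj_box (a : L) p m A : wpath p [a] m -> wpath m (boxword D A) m ->
  inJ D p ([a] ++ boxword D A ++ [letter_inv a]).
Proof.
  intros ha hA.
  assert (em : m = gsrc V (bleft D A)).
  { refine (wpath_src_uniq _ hA (wpath_boxword D A)). discriminate. }
  subst m. destruct a as [u | k].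
  - apply wpath_V_inv in ha as [-> h]. apply wpath_nil_inv in h. apply inJ_conj_V_box; exact h.
  - apply wpath_H_inv in ha as [-> h]. apply wpath_nil_inv in h. apply inJ_conj_H_box; exact h.
Qed.

Lemma inJ_conj_generator (a : L) p m g : generator D g -> wpath p [a] m -> wpath m g m ->
  inJ D p ([a] ++ g ++ [letter_inv a]).
Proof.
  intros [A [-> | ->]] ha hg; [exact (inJ_conj_box ha hg) |].
  apply wpath_winv in hg. rewrite winv_winv in hg.
  pose proof (inJ_winv (inJ_conj_box ha hg)) as J.
  rewrite !winv_app, !winv_single, letter_inv_inv, <- app_assoc in J. exact J.
Qed.

Lemma inJ_conj_product (a : L) p m ws : Forall (generator D) ws -> wpath p [a] m ->
  wpath m (concat ws) m -> inJ D p ([a] ++ concat ws ++ [letter_inv a]).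
Proof.
  intros hf ha. induction hf as [| g ws hg hf IH]; intros hw; simpl.
  - eapply inJ_expand; [apply inJ_nil | | exact (wpath_app ha (wpath_letter_inv ha))].
    destruct a as [u | k]; simpl.
    + apply (reduces_cancelV [] []). apply reduces_refl.
    + apply (reduces_cancelH [] []). apply reduces_refl.
  - destruct (wpath_app_inv _ _ hw) as [m1 [h1 h2]].
    destruct (generator_loop hg) as [b [hb ne]].
    assert (e1 : m = b) by (eapply wpath_src_uniq; eauto). subst b.
    assert (e2 : m1 = m) by (eapply wpath_tgt_uniq; eauto). subst m1.
    eapply inJ_reduce; [exact (inJ_app (inJ_conj_generator hg ha hb) (IH h2)) |].
    apply reduces_eq with ((a :: g) ++ letter_inv a :: a :: (concat ws ++ [letter_inv a])).
    { simpl. rewrite <- !app_assoc. reflexivity. }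
    destruct a as [u | k]; simpl.
    + apply (reduces_cancelV' (LV u :: g)). simpl. rewrite <- !app_assoc. apply reduces_refl.
    + apply (reduces_cancelH' (LH k :: g)). simpl. rewrite <- !app_assoc. apply reduces_refl.
Qed.

Lemma inJ_conj_letter (a : L) p m x :
  wpath p [a] m -> inJ D m x -> inJ D p ([a] ++ x ++ [letter_inv a]).
Proof.
  intros ha [hx [ws [hf he]]].
  assert (hc : wpath m (concat ws) m) by (destruct (free_eq_paths he) as [<- | []]; assumption).
  destruct (inJ_conj_product hf ha hc) as [_ [ws' [hf' he']]]. split.
  - eapply wpath_app; [exact ha |]. eapply wpath_app; [exact hx | exact (wpath_letter_inv ha)].
  - exists ws'. split; [exact hf' |]. eapply rst_trans; [| exact he'].
    apply free_eq_app with m m; auto using wpath_letter_inv.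
Qed.

End Normality.

(** ** Every word is equal modulo J to a word [v; h] *)
Section NormalForm.
Context (P : Type) (V H : groupoid P) (D : double_groupoid V H).
Notation L := (letter V H).
Notation GV := (g_ax V).
Notation GH := (g_ax H).
Hypothesis Fill : filling D.

(** By induction on the word, prepending one letter to a normal form
    [v0; h0]: a vertical letter is absorbed into v0; a horizontal letter k
    is moved past v0 through a filler box A with top k and right v0, using
    k v0 = l(A) b(A) modulo J.  Normality of J transports the inductive
    hypothesis through the new letter. *)
Lemma word_normal_form p (w : list L) q : wpath p w q -> exists (v : V) (h : H),
  gsrc V v = p /\ gtgt V v = gsrc H h /\ gtgt H h = q /\ inJ D p ([LV v; LH h] ++ winv w).
Proof.
  intros hw. induction hw as [p | v w q hw IH | k w q hw IH].
  - exists (gid V p), (gid H p).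
    rewrite (gid_src GV), (gid_tgt GV), (gid_src GH), (gid_tgt GH).
    split; [| split; [| split]]; auto.
    eapply inJ_expand; [apply inJ_nil | simpl | ].
    + apply (reduces_idV []). apply (reduces_idH [] []). apply reduces_refl.
    + apply wpath_V; [apply (gid_src GV) |]. rewrite (gid_tgt GV).
      apply wpath_H; [apply (gid_src GH) |]. rewrite (gid_tgt GH). constructor.
  - destruct IH as [v0 [h0 [e1 [e2 [e3 J]]]]].
    assert (J1 := inJ_conj_letter Fill (wpath_V v eq_refl (wpath_nil V H _)) J).
    exists (gcomp V v v0), h0. rewrite (gcomp_src GV), (gcomp_tgt GV) by auto.
    split; [| split; [| split]]; auto.
    eapply inJ_reduce; [exact J1 |]. simpl. apply (reduces_VV []).
    change (winv (LV v :: w)) with (winv ([LV v] ++ w)). rewrite winv_app. apply reduces_refl.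
  - destruct IH as [v0 [h0 [e1 [e2 [e3 J]]]]].
    assert (J1 := inJ_conj_letter Fill (wpath_H k eq_refl (wpath_nil V H _)) J).
    destruct (fill_top_right Fill k v0) as [A [ht hr]]; [congruence |].
    assert (JA := inJ_winv (inJ_box D A)).
    rewrite <- corner_tl, ht in JA.
    assert (J2 := inJ_app JA J1).
    rewrite winv_boxword, ht, hr in J2.
    assert (ey : gtgt H (bbot D A) = gsrc H h0) by (rewrite corner_br, hr; exact e2).
    exists (bleft D A), (gcomp H (bbot D A) h0).
    rewrite (gcomp_src GH _ _ ey), (gcomp_tgt GH _ _ ey), <- corner_tl, <- corner_bl, ht.
    split; [| split; [| split]]; auto.
    eapply inJ_reduce; [exact J2 |].
    apply reduces_eq with ([LV (bleft D A); LH (bbot D A); LV (ginv V v0); LH (ginv H k);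
                            LH k; LV v0; LH h0] ++ (winv w ++ [LH (ginv H k)])).
    { simpl. rewrite <- ?app_assoc. reflexivity. }
    apply (reduces_cancelH' [LV (bleft D A); LH (bbot D A); LV (ginv V v0)]).
    apply (reduces_cancelV' [LV (bleft D A); LH (bbot D A)]).
    apply (reduces_HH [LV (bleft D A)]).
    change (winv (LH k :: w)) with (winv ([LH k] ++ w)). rewrite winv_app. apply reduces_refl.
Qed.

End NormalForm.

Section Diagonal.
Context (P : Type) (V H : groupoid P) (D : double_groupoid V H).
Notation GV := (g_ax V).
Notation GH := (g_ax H).

(** Reflexivity: v h h^-1 v^-1 cancels to the empty word. *)
Lemma simB_refl : Reflexive (simB D).
Proof.
  intros [[v h] e]; simpl in *. split; [reflexivity | split; [reflexivity |]].
  eapply inJ_expand; [apply inJ_nil | |].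
  - apply (reduces_cancelH [LV v]). apply (reduces_cancelV [] []). apply reduces_refl.
  - exact (wpath_app (wpath_VH e) (wpath_winv (wpath_VH e))).
Qed.

(** Symmetry: the defining word of y ~ x is the inverse of that of x ~ y. *)
Lemma simB_sym : Symmetric (simB D).
Proof.
  intros [[v1 h1] e1] [[v2 h2] e2]; simpl. intros [et [es J]].
  split; [symmetry; exact et | split; [symmetry; exact es |]].
  apply inJ_winv in J. rewrite es in J.
  unfold winv in J; simpl in J. rewrite !(inv_inv GV), !(inv_inv GH) in J. exact J.
Qed.

(** Transitivity: the product of the two defining words cancels in the
    middle to the defining word of x ~ z. *)
Lemma simB_trans : Transitive (simB D).
Proof.
  intros [[v1 h1] e1] [[v2 h2] e2] [[v3 h3] e3]; simpl. intros [et1 [es1 J1]] [et2 [es2 J2]].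
  split; [congruence | split; [congruence |]]. rewrite <- es1 in J2.
  eapply inJ_reduce; [exact (inJ_app J1 J2) |]. simpl.
  apply (reduces_cancelV' [LV v1; LH h1; LH (ginv H h2)]).
  apply (reduces_cancelH' [LV v1; LH h1]). apply reduces_refl.
Qed.

Lemma simB_equivalence : Equivalence (simB D).
Proof. split; [exact simB_refl | exact simB_sym | exact simB_trans]. Qed.

Lemma wpath_phi_word (x : VH V H) : wpath (phi_src x) (phi_word x) (phi_tgt x).
Proof. destruct x as [[v h] e]. exact (wpath_VH e). Qed.

(** Well-definedness and injectivity of phi: for x, y with the same
    endpoints, phi x = phi y in D(B) says exactly that x ~_B y. *)
Lemma phi_well_defined (x y : VH V H) :
  simB D x y -> D_eq D (phi_src x) (phi_tgt x) (phi_word x) (phi_word y).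
Proof.
  pose proof (wpath_phi_word y) as hy. destruct x as [[v1 h1] e1], y as [[v2 h2] e2].
  unfold D_eq, phi_src, phi_tgt, phi_word in *; simpl in *. intros [et [es J]].
  split; [exact (wpath_VH e1) | split; [rewrite es, et; exact hy | exact J]].
Qed.

Lemma phi_injective (x y : VH V H) :
  phi_src x = phi_src y -> phi_tgt x = phi_tgt y ->
  D_eq D (phi_src x) (phi_tgt x) (phi_word x) (phi_word y) -> simB D x y.
Proof.
  destruct x as [[v1 h1] e1], y as [[v2 h2] e2].
  unfold D_eq, phi_src, phi_tgt, phi_word; simpl. intros es et [_ [_ J]].
  unfold simB; simpl. auto.
Qed.

Lemma phi_surjective (Fill : filling D) p q (w : list (letter V H)) :
  wpath p w q -> exists x : VH V H,
    phi_src x = p /\ phi_tgt x = q /\ D_eq D p q (phi_word x) w.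
Proof.
  intros hw. destruct (word_normal_form Fill hw) as [v [h [e1 [e2 [e3 J]]]]].
  exists (exist _ (v, h) e2). unfold D_eq, phi_src, phi_tgt, phi_word; simpl.
  split; [exact e1 | split; [exact e3 | split; [| split; [exact hw | exact J]]]].
  rewrite <- e1, <- e3. exact (wpath_VH e2).
Qed.

End Diagonal.

Theorem proposition3p1 (P : Type) (V H : groupoid P) (D : double_groupoid V H) :
  slim D -> filling D ->
  (* ~_B is an equivalence relation on V x_{b,l} H *)
  Equivalence (simB D) /\
  (* phi is well defined *)
  (forall x y : VH V H, simB D x y ->
     D_eq D (phi_src x) (phi_tgt x) (phi_word x) (phi_word y)) /\
  (* phi is injective *)
  (forall x y : VH V H,
     phi_src x = phi_src y -> phi_tgt x = phi_tgt y ->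
     D_eq D (phi_src x) (phi_tgt x) (phi_word x) (phi_word y) -> simB D x y) /\
  (* phi is surjective, compatibly with the maps to P *)
  (forall (p q : P) (w : list (letter V H)), wpath p w q ->
     exists x : VH V H, phi_src x = p /\ phi_tgt x = q /\
       D_eq D p q (phi_word x) w).
Proof.
  intros _ Fill.
  split; [exact (simB_equivalence D) |].
  split; [exact (@phi_well_defined P V H D) |].
  split; [exact (@phi_injective P V H D) |].
  exact (phi_surjective Fill).
Qed.
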